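(* Let $A,B$ be commutative rings, $f:A\to B$ a ring homomorphism, $J$ an ideal of $B$, $\mathfrak a$ an ideal of $A$, $\mathfrak p$ a prime ideal of $A$ and $\mathfrak q$ a prime ideal of $B$. Then (1) $\mathfrak a^e\subseteq\mathfrak p^{\prime_f}$ if and only if $\mathfrak a\subseteq\mathfrak p$; (2) $\mathfrak a^e\subseteq\overline{\mathfrak q}^f$ if and only if $f(\mathfrak a)\subseteq\mathfrak q$.
   Context: $A\bowtie^fJ=\{(a,f(a)+j): a\in A,\ j\in J\}\subseteq A\times B$; $\iota_A(x)=(x,f(x))$ and $\mathfrak a^e=\iota_A(\mathfrak a)(A\bowtie^fJ)$. For a prime $\mathfrak p$ of $A$, $\mathfrak p^{\prime_f}=\{(p,f(p)+j): p\in\mathfrak p,\ j\in J\}$; for a prime $\mathfrak q$ of $B$, $\overline{\mathfrak q}^f=\{(a,f(a)+j): a\in A,\ j\in J,\ f(a)+j\in\mathfrak q\}$. *)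

From HB Require Import structures.
From mathcomp Require Import all_boot all_algebra.
Set Implicit Arguments. Unset Strict Implicit. Unset Printing Implicit Defensive.
Import GRing.Theory.
Local Open Scope ring_scope.

Definition is_ideal (R : comNzRingType) (I : R -> Prop) : Prop :=
  [/\ I 0, (forall x y, I x -> I y -> I (x + y)) & (forall r x, I x -> I (r * x))].

Definition is_prime_ideal (R : comNzRingType) (P : R -> Prop) : Prop :=
  [/\ is_ideal P, ~ P 1 & (forall x y, P (x * y) -> P x \/ P y)].

Definition subset_of (T : Type) (X Y : T -> Prop) : Prop := forall x, X x -> Y x.

Section Dup.
Variables (A B : comNzRingType) (f : {rmorphism A -> B}).

Definition amalg (J : B -> Prop) : (A * B)%type -> Prop :=
  fun z => exists a j, J j /\ z = (a, f a + j).

Definition iotaA (x : A) : (A * B)%type := (x, f x).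

(* 𝔞^e = ι_A(𝔞)(A ⋈^f J): the ideal of A ⋈^f J generated by ι_A(𝔞),
   i.e. all finite sums Σ r_i ι_A(a_i), r_i ∈ A ⋈^f J, a_i ∈ 𝔞. *)
Definition ext_ideal (J : B -> Prop) (a : A -> Prop) : (A * B)%type -> Prop :=
  fun z => exists (n : nat) (r : 'I_n -> (A * B)%type) (x : 'I_n -> A),
    (forall i, amalg J (r i)) /\ (forall i, a (x i)) /\
    z = \sum_(i < n) r i * iotaA (x i).

Definition prime_prime_f (J : B -> Prop) (p : A -> Prop) : (A * B)%type -> Prop :=
  fun z => exists x j, p x /\ J j /\ z = (x, f x + j).

Definition qbar_f (J : B -> Prop) (q : B -> Prop) : (A * B)%type -> Prop :=
  fun z => exists x j, J j /\ q (f x + j) /\ z = (x, f x + j).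

End Dup.

From HB Require Import structures.
From mathcomp Require Import all_boot all_algebra.
Set Implicit Arguments.
Unset Strict Implicit.
Unset Printing Implicit Defensive.
Local Open Scope ring_scope.
Import GRing.Theory.

(* An element z of a^e is a sum of terms r_i (a_i, f a_i) with r_i in the
   amalgamation, so its first coordinate lies in a, its second coordinate in
   the ideal generated by f(a), and z.2 - f z.1 = sum_i (r_i.2 - f r_i.1) f a_i
   lies in J.  Hence p^{'_f} = {z in A ⋈^f J | z.1 in p} contains a^e as soon
   as a ⊆ p, and qbar^f = {z in A ⋈^f J | z.2 in q} contains a^e as soon as
   f(a) ⊆ q.  The converses are tested on the generators (a, f a) of a^e. *)

Lemma ideal_sum (R : comNzRingType) (I : R -> Prop) n (F : 'I_n -> R) :
  is_ideal I -> (forall i, I (F i)) -> I (\sum_(i < n) F i).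
Proof. by case=> I0 ID _ IF; elim/big_rec: _ => // i x _; apply: ID. Qed.

Section Amalgamation.
Variables (A B : comNzRingType) (f : {rmorphism A -> B}) (J : B -> Prop).

Lemma amalgP z : amalg f J z <-> J (z.2 - f z.1).
Proof.
split=> [[x [j [Jj ->]]] | Jz]; first by rewrite /= addrC addKr.
by exists z.1, (z.2 - f z.1); split=> //; rewrite subrKC; case: (z).
Qed.

Lemma prime_prime_fE (p : A -> Prop) z :
  prime_prime_f f J p z <-> p z.1 /\ amalg f J z.
Proof.
split=> [[x [j [px [Jj ->]]]] | [pz /amalgP Jz]]; first by split=> //; exists x, j.
exists z.1, (z.2 - f z.1); do 2!split=> //.
by rewrite subrKC; case: (z).
Qed.

Lemma qbar_fE (q : B -> Prop) z :
  qbar_f f J q z <-> q z.2 /\ amalg f J z.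
Proof.
split=> [[x [j [Jj [qz ->]]]] | [qz /amalgP Jz]]; first by split=> //; exists x, j.
by exists z.1, (z.2 - f z.1); rewrite subrKC; case: z Jz qz.
Qed.

Variable a : A -> Prop.

Lemma ext_ideal_iotaA x : is_ideal J -> a x -> ext_ideal f J a (iotaA f x).
Proof.
case=> J0 _ _ ax; exists 1%N, (fun=> 1), (fun=> x); split; last first.
  by split=> //; rewrite big_ord1 mul1r.
by move=> _; apply/amalgP; rewrite /= rmorph1 subrr.
Qed.

Lemma ext_ideal_fst z : is_ideal a -> ext_ideal f J a z -> a z.1.
Proof.
move=> idealA [n [r [x [_ [ax ->]]]]].
rewrite raddf_sum; apply: ideal_sum => // i; case: idealA => _ _ aM; exact/aM/ax.
Qed.

Lemma ext_ideal_snd (I : B -> Prop) z :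
  is_ideal I -> (forall x, a x -> I (f x)) -> ext_ideal f J a z -> I z.2.
Proof.
move=> idealI aI [n [r [x [_ [ax ->]]]]].
rewrite raddf_sum; apply: ideal_sum => // i; case: idealI => _ _ IM; exact/IM/aI/ax.
Qed.

Lemma ext_ideal_amalg z : is_ideal J -> ext_ideal f J a z -> amalg f J z.
Proof.
move=> idealJ [n [r [x [ramalg [_ ->]]]]]; apply/amalgP.
have -> : (\sum_(i < n) r i * iotaA f (x i)).2 -
          f (\sum_(i < n) r i * iotaA f (x i)).1 =
          \sum_(i < n) ((r i).2 - f (r i).1) * f (x i).
  rewrite !raddf_sum -big_split; apply: eq_bigr => i _.
  by rewrite /= rmorphM mulrBl.
apply: ideal_sum => // i; case: idealJ => _ _ JM.
by rewrite mulrC; apply/JM/amalgP.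
Qed.

End Amalgamation.

Theorem lemma4p3 (A B : comNzRingType) (f : {rmorphism A -> B})
  (J : B -> Prop) (a p : A -> Prop) (q : B -> Prop) :
  is_ideal J -> is_ideal a -> is_prime_ideal p -> is_prime_ideal q ->
  (subset_of (ext_ideal f J a) (prime_prime_f f J p) <-> subset_of a p) /\
  (subset_of (ext_ideal f J a) (qbar_f f J q) <->
     (forall x, a x -> q (f x))).
Proof.
move=> idealJ idealA _ [idealQ _ _]; split; split.
- move=> ext_p x ax.
  by have /prime_prime_fE[] := ext_p _ (ext_ideal_iotaA f idealJ ax).
- move=> ap z ez; apply/prime_prime_fE; split.
    exact/ap/(ext_ideal_fst idealA ez).
  exact: ext_ideal_amalg ez.
- move=> ext_q x ax.
  by have /qbar_fE[] := ext_q _ (ext_ideal_iotaA f idealJ ax).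
- move=> aq z ez; apply/qbar_fE; split.
    exact: ext_ideal_snd idealQ aq ez.
  exact: ext_ideal_amalg ez.
Qed.
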